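(* Let $d\ge1$ and let $(\alpha_0,\alpha_1,\dots)$ be a sequence of $d\times d$ complex matrices with $\|\alpha_i\|<1$, with associated block CMV matrices $\mathcal{C}=\mathcal{C}(\alpha_0,\alpha_1,\dots)$ and $\hat{\mathcal{C}}=\hat{\mathcal{C}}(\alpha_0,\alpha_1,\dots)$. Then for every $j\in\mathbb{N}$, $$\mathcal{C}=\begin{cases}(\mathbb{1}_j\oplus\mathcal{C}^{(j)})(\mathcal{C}_j\oplus\mathbb{1}_\infty), & j\text{ even},\\ (\mathcal{C}_j\oplus\mathbb{1}_\infty)(\mathbb{1}_j\oplus\hat{\mathcal{C}}^{(j)}), & j\text{ odd},\end{cases}\qquad \hat{\mathcal{C}}=\begin{cases}(\hat{\mathcal{C}}_j\oplus\mathbb{1}_\infty)(\mathbb{1}_j\oplus\hat{\mathcal{C}}^{(j)}), & j\text{ even},\\ (\mathbb{1}_j\oplus\mathcal{C}^{(j)})(\hat{\mathcal{C}}_j\oplus\mathbb{1}_\infty), & j\text{ odd},\end{cases}$$ where $\mathcal{C}_j=\mathcal{C}_j(\alpha_0,\dots,\alpha_{j-1})$, $\hat{\mathcal{C}}_j=\hat{\mathcal{C}}_j(\alpha_0,\dots,\alpha_{j-1})$, $\mathcal{C}^{(j)}=\mathcal{C}(\alpha_j,\alpha_{j+1},\dots)$ and $\hat{\mathcal{C}}^{(j)}=\hat{\mathcal{C}}(\alpha_j,\alpha_{j+1},\dots)$. (These are $V_j$-overlapping factorizations.)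
   Context: Let $\ell^2$ have canonical basis $\{e_i\}_{i\ge0}$ and canonical subspaces $V_m=\operatorname{span}\{e_{md},\dots,e_{md+d-1}\}$, $m\ge0$, so $\ell^2=\bigoplus_{m\ge0}V_m$. For a $d\times d$ matrix $\alpha$ with $\|\alpha\|\le1$ set $\rho^L=(\mathbb{1}-\alpha^\dagger\alpha)^{1/2}$, $\rho^R=(\mathbb{1}-\alpha\alpha^\dagger)^{1/2}$ and $\Theta(\alpha)=\begin{pmatrix}\alpha^\dagger&\rho^L\\ \rho^R&-\alpha\end{pmatrix}$ ($\mathbb{1}$ the $d\times d$ identity). Given $(\alpha_0,\alpha_1,\dots)$, let $\mathcal{L}=\Theta(\alpha_0)\oplus\Theta(\alpha_2)\oplus\Theta(\alpha_4)\oplus\cdots$ and $\mathcal{M}=\mathbb{1}\oplus\Theta(\alpha_1)\oplus\Theta(\alpha_3)\oplus\cdots$ (so that $\Theta(\alpha_i)$ acts on $V_i\oplus V_{i+1}$), and define the block CMV matrices $\mathcal{C}(\alpha_0,\alpha_1,\dots)=\mathcal{L}\mathcal{M}$, $\hat{\mathcal{C}}(\alpha_0,\alpha_1,\dots)=\mathcal{M}\mathcal{L}$. For $N\ge0$ and $(\alpha_0,\dots,\alpha_{N-1})$, the finite block CMV matrices acting on $V_0\oplus\cdots\oplus V_N$ are $\mathcal{C}_N=\mathcal{L}_N\mathcal{M}_N$ and $\hat{\mathcal{C}}_N=\mathcal{M}_N\mathcal{L}_N$, where for odd $N$: $\mathcal{L}_N=\Theta(\alpha_0)\oplus\Theta(\alpha_2)\oplus\cdots\oplus\Theta(\alpha_{N-1})$,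 $\mathcal{M}_N=\mathbb{1}\oplus\Theta(\alpha_1)\oplus\cdots\oplus\Theta(\alpha_{N-2})\oplus\mathbb{1}$; for even $N$: $\mathcal{L}_N=\Theta(\alpha_0)\oplus\cdots\oplus\Theta(\alpha_{N-2})\oplus\mathbb{1}$, $\mathcal{M}_N=\mathbb{1}\oplus\Theta(\alpha_1)\oplus\cdots\oplus\Theta(\alpha_{N-1})$ (with $\mathcal{C}_0=\hat{\mathcal C}_0=\mathbb{1}$). In the factorizations, $\mathcal{C}_j,\hat{\mathcal{C}}_j$ act on $V_0\oplus\cdots\oplus V_j$; $\mathcal{C}^{(j)},\hat{\mathcal{C}}^{(j)}$ act on $\bigoplus_{m\ge j}V_m$ (with $V_j$ in the role of the first block); $\mathbb{1}_j$ is the identity on $V_0\oplus\cdots\oplus V_{j-1}$ and $\mathbb{1}_\infty$ is the identity on $\bigoplus_{m>j}V_m$. *)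

From mathcomp Require Import all_boot all_algebra.
From mathcomp Require Import reals complex.
From Stdlib Require Import ClassicalEpsilon.
Set Implicit Arguments. Unset Strict Implicit. Unset Printing Implicit Defensive.
Import GRing.Theory Num.Theory.
Local Open Scope ring_scope.

Section BlockCMV.
Variable R : realType.
Local Notation C := (R[i]).
Variable d : nat.

Definition adj (A : 'M[C]_d) : 'M[C]_d := \matrix_(i, j) (A j i)^*.

Definition vnorm2 (v : 'cV[C]_d) : C := \sum_(i < d) `|v i 0| ^+ 2.

(* operator norm (w.r.t. the Euclidean norm) strictly less than 1:
   ||A|| = sup_{v<>0} |Av|/|v| <= c for some c < 1 *)
Definition opnorm_lt1 (A : 'M[C]_d) : Prop :=
  exists c : C, 0 <= c /\ c < 1 /\ forall v : 'cV[C]_d,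
      vnorm2 (A *m v) <= c ^+ 2 * vnorm2 v.

Definition vadj (v : 'cV[C]_d) : 'rV[C]_d := \matrix_(i, j) (v j i)^*.
Definition psd (P : 'M[C]_d) : Prop :=
  adj P = P /\ forall v : 'cV[C]_d, 0 <= (vadj v *m P *m v) 0 0.

(* the positive semidefinite square root A^{1/2} (for A psd it exists
   and is unique) *)
Definition msqrt (A : 'M[C]_d) : 'M[C]_d :=
  epsilon (inhabits 0) (fun P => psd P /\ P *m P = A).

Definition rhoL (a : 'M[C]_d) : 'M[C]_d := msqrt (1%:M - adj a *m a).
Definition rhoR (a : 'M[C]_d) : 'M[C]_d := msqrt (1%:M - a *m adj a).

(* A vector of l^2 = (+)_{m>=0} V_m, V_m = C^d, is represented by its
   block components x m in V_m; operators are maps on such sequences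
   (all operators below are block-banded so they act on all sequences). *)
Definition blockseq := nat -> 'cV[C]_d.

(* The block-diagonal operator which is Theta(A i) on V_i (+) V_(i+1)
   for every i with P i, and the identity on blocks not covered
   (the selected pairs {i, i+1} are assumed disjoint). *)
Definition thetas (A : nat -> 'M[C]_d) (P : pred nat) (x : blockseq) : blockseq :=
  fun m =>
    if P m then adj (A m) *m x m + rhoL (A m) *m x m.+1
    else if (0 < m)%N && P m.-1 then
      rhoR (A m.-1) *m x m.-1 - A m.-1 *m x m
    else x m.

Definition Lop (al : nat -> 'M[C]_d) : blockseq -> blockseq := thetas al (fun i => ~~ odd i).
Definition Mop (al : nat -> 'M[C]_d) : blockseq -> blockseq := thetas al (fun i => odd i).
Definition CMV (al : nat -> 'M[C]_d) : blockseq -> blockseq := fun x => Lop al (Mop al x).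
Definition CMVhat (al : nat -> 'M[C]_d) : blockseq -> blockseq := fun x => Mop al (Lop al x).

Definition fseq (N : nat) := 'I_N.+1 -> 'cV[C]_d.
Definition fext N (x : fseq N) : blockseq :=
  fun k => if (k <= N)%N then x (inord k) else 0.

(* finite L_N, M_N: Theta(alpha_i) on V_i (+) V_(i+1) for i even (resp. odd)
   with i+1 <= N, identity blocks otherwise (matches the definition for
   N odd / N even).  Only alpha_0 ... alpha_(N-1) are used. *)
Definition LopN N (al : nat -> 'M[C]_d) (x : fseq N) : fseq N :=
  fun i => thetas al (fun k => ~~ odd k && (k.+1 <= N)%N) (fext x) i.
Definition MopN N (al : nat -> 'M[C]_d) (x : fseq N) : fseq N :=
  fun i => thetas al (fun k => odd k && (k.+1 <= N)%N) (fext x) i.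
Definition CMVN N al : fseq N -> fseq N := fun x => LopN al (MopN al x).
Definition CMVNhat N al : fseq N -> fseq N := fun x => MopN al (LopN al x).

(* T (+) 1_oo : T acts on V_0 (+) ... (+) V_N, identity on V_m, m > N *)
Definition dsum_id N (T : fseq N -> fseq N) : blockseq -> blockseq :=
  fun x m => if (m <= N)%N then T (fun i : 'I_N.+1 => x i) (inord m) else x m.

(* 1_j (+) S : identity on V_0 ... V_(j-1), S acts on (+)_{m>=j} V_m
   with V_j in the role of the first block *)
Definition id_dsum j (S : blockseq -> blockseq) : blockseq -> blockseq :=
  fun x m => if (m < j)%N then x m else S (fun k => x (j + k)%N) (m - j)%N.

Definition shift j (al : nat -> 'M[C]_d) : nat -> 'M[C]_d := fun k => al (j + k)%N.

End BlockCMV.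

(* Each of L, M, L_j, M_j and their shifted versions is a product of 2x2 blocks
   Theta(alpha_k) acting on V_k (+) V_(k+1) for k of one parity.  Such a product
   splits into the blocks with k < j times those with k >= j, and products whose
   blocks act on disjoint sets of V_m's commute.  After splitting both factors of
   L M (or M L) at j, the two middle pieces that must be swapped can only meet at
   V_j, and for the parity of j at hand one of them has no block there. *)

From mathcomp Require Import all_boot all_algebra.
From mathcomp Require Import reals complex zify.
From Stdlib Require Import FunctionalExtensionality.
Import GRing.Theory Num.Theory.
Local Open Scope ring_scope.

Section BlockCMVFactorization.
Context {R : realType} {d : nat}.
Implicit Types (A : nat -> 'M[R[i]]_d) (P Q : pred nat) (x : blockseq R d).

Definition theta_support P m := P m || (0 < m)%N && P m.-1.

Definition disjoint_support P Q := forall m, ~~ (theta_support P m && theta_support Q m).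

Lemma disjoint_supportC P Q : disjoint_support P Q -> disjoint_support Q P.
Proof. by move=> PQ m; rewrite andbC. Qed.

Lemma thetas_offsupport A P x m : ~~ theta_support P m -> thetas A P x m = x m.
Proof.
rewrite /theta_support negb_or => /andP[/negbTE Pm /negbTE Pm1].
by rewrite /thetas Pm Pm1.
Qed.

Lemma thetasU A P Q x : disjoint_support P Q ->
  thetas A (fun k => P k || Q k) x = thetas A P (thetas A Q x).
Proof.
move=> PQ; apply: functional_extensionality => m.
set y := thetas A Q x.
have offQ n : theta_support P n -> y n = x n.
  by move=> tP; apply: thetas_offsupport; move: (PQ n); rewrite tP.
have [Pm | nPm] := boolP (P m).
  have tPm1 : theta_support P m.+1 by rewrite /theta_support /= Pm orbT.
  by rewrite /thetas Pm /= !offQ // /theta_support Pm.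
have [Pm1 | nPm1] := boolP ((0 < m)%N && P m.-1).
  have tPm : theta_support P m by rewrite /theta_support Pm1 orbT.
  have tPm' : theta_support P m.-1 by case/andP: Pm1 => _ Pm'; rewrite /theta_support Pm'.
  have nQm : Q m = false.
    by apply/negbTE; move: (PQ m); rewrite tPm /theta_support negb_or => /andP[].
  rewrite /thetas (negbTE nPm) nQm Pm1 /= !offQ //.
  by case/andP: Pm1 => -> ->.
by rewrite /thetas (negbTE nPm) (negbTE nPm1) andb_orr (negbTE nPm1).
Qed.

Lemma thetasC A P Q x : disjoint_support P Q ->
  thetas A P (thetas A Q x) = thetas A Q (thetas A P x).
Proof.
move=> PQ; rewrite -!thetasU //; last exact: disjoint_supportC.
by congr thetas; apply: functional_extensionality => k; rewrite orbC.
Qed.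

Definition below j P : pred nat := fun k => P k && (k.+1 <= j)%N.
Definition above j P : pred nat := fun k => (j <= k)%N && P k.

Definition no_consecutive P := forall k, P k -> ~~ P k.+1.

Lemma disjoint_support_below_above j P Q :
  ~~ Q j -> disjoint_support (below j P) (above j Q).
Proof.
move=> nQj m; rewrite /theta_support /below /above.
have [ltmj | ltjm | ->] := ltngtP m j; lia.
Qed.

Lemma disjoint_support_above_below j P :
  no_consecutive P -> disjoint_support (above j P) (below j P).
Proof.
move=> ncP m; rewrite /theta_support /below /above.
by have := ncP m.-1; case: m => [|m] /=; lia.
Qed.

Lemma thetas_above_below A j P x : no_consecutive P ->
  thetas A P x = thetas A (above j P) (thetas A (below j P) x).
Proof.
move=> ncP; rewrite -thetasU; last exact: disjoint_support_above_below.
by congr thetas; apply: functional_extensionality => k; rewrite /above /below; lia.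
Qed.

Lemma thetas_below_above A j P x : no_consecutive P ->
  thetas A P x = thetas A (below j P) (thetas A (above j P) x).
Proof.
move=> ncP; rewrite (thetas_above_below A j _ _ ncP) thetasC //.
exact: disjoint_support_above_below.
Qed.

Lemma thetas2_above_below A j P Q x :
  no_consecutive P -> no_consecutive Q -> ~~ Q j ->
  thetas A P (thetas A Q x) =
  thetas A (above j P) (thetas A (above j Q)
    (thetas A (below j P) (thetas A (below j Q) x))).
Proof.
move=> ncP ncQ nQj.
rewrite (thetas_above_below A j _ _ ncP) (thetas_above_below A j _ _ ncQ).
by rewrite (thetasC _ _ _ _ (disjoint_support_below_above j P Q nQj)).
Qed.

Lemma thetas2_below_above A j P Q x :
  no_consecutive P -> no_consecutive Q -> ~~ P j ->
  thetas A P (thetas A Q x) =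
  thetas A (below j P) (thetas A (below j Q)
    (thetas A (above j P) (thetas A (above j Q) x))).
Proof.
move=> ncP ncQ nPj.
rewrite (thetas_below_above A j _ _ ncP) (thetas_below_above A j _ _ ncQ).
by rewrite (thetasC _ _ _ _ (disjoint_supportC _ _ (disjoint_support_below_above j Q P nPj))).
Qed.

Lemma id_dsum_comp j (S T : blockseq R d -> blockseq R d) x :
  id_dsum j (fun y => S (T y)) x = id_dsum j S (id_dsum j T x).
Proof.
apply: functional_extensionality => m; rewrite /id_dsum.
case: ltnP => // _; congr S; apply: functional_extensionality => k.
by rewrite ltnNge leq_addr /= addKn.
Qed.

Lemma id_dsum_thetas j A P x :
  id_dsum j (thetas (shift j A) P) x = thetas A (above j (fun k => P (k - j)%N)) x.
Proof.
apply: functional_extensionality => m; rewrite /id_dsum /thetas /above /shift.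
case: ltnP => [ltmj | lejm].
  have -> : (j <= m.-1)%N = false by lia.
  by rewrite /= andbF.
rewrite -(subnKC lejm); move: (m - j)%N => k {m lejm}.
rewrite addKn addnS /=; case: (P k) => //.
case: k => [|k]; last by rewrite addnS /= leq_addr addKn.
rewrite addn0 /=.
by have -> : [&& (0 < j)%N, (j <= j.-1)%N & P (j.-1 - j)%N] = false by lia.
Qed.

Lemma dsum_id_comp N (T1 T2 : fseq R d N -> fseq R d N) x :
  dsum_id (fun y => T1 (T2 y)) x = dsum_id T1 (dsum_id T2 x).
Proof.
apply: functional_extensionality => m; rewrite /dsum_id.
case: leqP => // _; congr T1; apply: functional_extensionality => i.
by rewrite leq_ord inord_val.
Qed.

Lemma dsum_id_thetas N A P x : (forall k, P k -> (k.+1 <= N)%N) ->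
  dsum_id (fun (y : fseq R d N) (i : 'I_N.+1) => thetas A P (fext y) i) x = thetas A P x.
Proof.
move=> PN; apply: functional_extensionality => m; rewrite /dsum_id.
case: leqP => [leMN | ltNm]; last first.
  by apply/esym/thetas_offsupport; have := PN m; have := PN m.-1; rewrite /theta_support; lia.
have fextE k : (k <= N)%N -> fext (fun i : 'I_N.+1 => x i) k = x k.
  by move=> leKN; rewrite /fext leKN inordK.
rewrite inordK // /thetas; case: ifP => [Pm | _]; first by rewrite !fextE ?PN // ltnW ?PN.
by rewrite !fextE // (leq_trans (leq_pred m)).
Qed.

End BlockCMVFactorization.

Theorem proposition4p1 (R : realType) (d : nat) (hd : (0 < d)%N)
    (al : nat -> 'M[R[i]]_d) (hal : forall n, opnorm_lt1 (al n)) (j : nat) :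
  (forall x : blockseq R d,
     CMV al x =
     (if ~~ odd j
      then id_dsum j (CMV (shift j al)) (dsum_id (CMVN (N:=j) al) x)
      else dsum_id (CMVN (N:=j) al) (id_dsum j (CMVhat (shift j al)) x)))
  /\
  (forall x : blockseq R d,
     CMVhat al x =
     (if ~~ odd j
      then dsum_id (CMVNhat (N:=j) al) (id_dsum j (CMVhat (shift j al)) x)
      else id_dsum j (CMV (shift j al)) (dsum_id (CMVNhat (N:=j) al) x))).
Proof.
have ncE : no_consecutive (fun k => ~~ odd k) by move=> k; rewrite /= negbK.
have ncO : no_consecutive odd by move=> k; rewrite /= negbK.
split=> x; rewrite /CMV /CMVhat /CMVN /CMVNhat /Lop /Mop !id_dsum_comp !id_dsum_thetas.
all: rewrite !dsum_id_comp !dsum_id_thetas; try by move=> k /andP[].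
all: case oj: (odd j) => /=.
1: rewrite (thetas2_below_above _ j _ _ _ ncE ncO) ?oj //.
2: rewrite (thetas2_above_below _ j _ _ _ ncE ncO) ?oj //.
3: rewrite (thetas2_above_below _ j _ _ _ ncO ncE) ?oj //.
4: rewrite (thetas2_below_above _ j _ _ _ ncO ncE) ?oj //.
all: congr (thetas _ _ (thetas _ _ (thetas _ _ (thetas _ _ _)))).
all: by apply: functional_extensionality => k; rewrite /above; lia.
Qed.
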